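(* Let $\mathscr{H}$ be a real Hilbert space and let $\mathcal{V}=\{v_n\}_{n=0}^\infty\subset\mathscr{H}$ be a sequence without positive relations such that $\mathcal{C}[[\mathcal{V}]]$ is closed. Then for every $w\in\mathscr{H}$ there is a unique subset $S\subset\mathbb{N}$ such that \[ P_{\mathcal{C}[[\mathcal{V}]]}(w)=\sum_{n\in S} a_n v_n\quad\text{with } a_n>0 \text{ for all } n\in S, \] where the pair $(S,\{a_n\}_{n\in S})$ is uniquely determined by the conditions: (i) $\sum_{n\in S}a_nv_n$ converges in $\mathscr{H}$ and $a_n>0$ for all $n\in S$; (ii) $\sum_{k\in S}a_k\langle v_k,v_n\rangle\ge\langle w,v_n\rangle$ for all $n\in\mathbb{N}$; (iii) $\sum_{k\in S}a_k\langle v_k,v_n\rangle=\langle w,v_n\rangle$ for all $n\in S$.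
   Context: $\mathbb{N}=\{0,1,2,\dots\}$. $\mathcal{C}[[\mathcal{V}]]=\{\sum_{n=0}^\infty a_n v_n : a_n\ge 0,\ \text{the series converges in }\mathscr{H}\}$ (convergence of partial sums $\sum_{n=0}^N$). For $S\subset\mathbb{N}$, ''$\sum_{n\in S}a_nv_n$ converges'' means $\lim_{N\to\infty}\sum_{n\in S,\,n\le N}a_nv_n$ exists in $\mathscr{H}$; by convention $\sum_{n\in\emptyset}a_nv_n=0$. A sequence $\{v_n\}$ has no positive relations if whenever $\sum_{n=0}^\infty a_nv_n=\sum_{n=0}^\infty b_nv_n$ for two convergent series with all $a_n,b_n\ge 0$, one has $a_n=b_n$ for all $n$. For a closed convex set $K\subset\mathscr{H}$, $P_K(w)$ denotes the metric projection: the unique point of $K$ closest to $w$. *)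

From HB Require Import structures.
From mathcomp Require Import all_boot all_order all_algebra.
From mathcomp Require Import all_classical all_reals all_analysis.
Set Implicit Arguments. Unset Strict Implicit. Unset Printing Implicit Defensive.
Import Order.TTheory GRing.Theory Num.Theory.
Import numFieldNormedType.Exports.
Local Open Scope classical_set_scope.
Local Open Scope ring_scope.

(* A real Hilbert space is modelled as a complete normed module H over the
   reals R together with an inner product ip whose induced norm is the norm
   of H. *)
Definition is_inner_product (R : realType) (H : normedModType R)
  (ip : H -> H -> R) : Prop :=
  [/\ (forall x y, ip x y = ip y x),
      (forall x y z, ip (x + y) z = ip x z + ip y z),
      (forall (c : R) x y, ip (c *: x) y = c * ip x y) &
      (forall x, ip x x = `|x| ^+ 2)].

Definition psum (R : realType) (H : normedModType R) (S : set nat)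
  (a : nat -> R) (v : nat -> H) (N : nat) : H :=
  \sum_(0 <= n < N.+1 | n \in S) a n *: v n.

Definition sum_cvg (R : realType) (H : normedModType R) (S : set nat)
  (a : nat -> R) (v : nat -> H) : Prop := cvgn (psum S a v).

Definition sum_on (R : realType) (H : normedModType R) (S : set nat)
  (a : nat -> R) (v : nat -> H) : H := limn (psum S a v).

Definition rsum_on (R : realType) (H : normedModType R) (ip : H -> H -> R)
  (S : set nat) (a : nat -> R) (v : nat -> H) (n : nat) : R :=
  limn (fun N => \sum_(0 <= k < N.+1 | k \in S) a k * ip (v k) (v n)).

Definition cone (R : realType) (H : normedModType R) (v : nat -> H) : set H :=
  [set x | exists a : nat -> R, (forall n, 0 <= a n) /\
     sum_cvg setT a v /\ x = sum_on setT a v].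

Definition no_positive_relations (R : realType) (H : normedModType R)
  (v : nat -> H) : Prop :=
  forall a b : nat -> R, (forall n, 0 <= a n) -> (forall n, 0 <= b n) ->
    sum_cvg setT a v -> sum_cvg setT b v ->
    sum_on setT a v = sum_on setT b v -> forall n, a n = b n.

Definition is_metric_projection (R : realType) (H : normedModType R)
  (K : set H) (w p : H) : Prop :=
  K p /\ forall y, K y -> `|w - p| <= `|w - y|.

Definition cond_i (R : realType) (H : normedModType R) (v : nat -> H)
  (S : set nat) (a : nat -> R) : Prop :=
  sum_cvg S a v /\ (forall n, S n -> 0 < a n).

Definition cond_ii (R : realType) (H : normedModType R) (ip : H -> H -> R)
  (v : nat -> H) (w : H) (S : set nat) (a : nat -> R) : Prop :=
  forall n, rsum_on ip S a v n >= ip w (v n).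

Definition cond_iii (R : realType) (H : normedModType R) (ip : H -> H -> R)
  (v : nat -> H) (w : H) (S : set nat) (a : nat -> R) : Prop :=
  forall n, S n -> rsum_on ip S a v n = ip w (v n).

From HB Require Import structures.
From mathcomp Require Import all_boot all_order all_algebra.
From mathcomp Require Import all_classical all_reals all_analysis.
From mathcomp Require Import ring lra.
Import Order.TTheory GRing.Theory Num.Theory.
Import numFieldNormedType.Exports.
Local Open Scope classical_set_scope.
Local Open Scope ring_scope.

(** The cone C = C[[V]] is closed and convex, so the metric projection p of w
    onto C exists and is unique: by the parallelogram law a minimizing
    sequence is Cauchy, and two minimizers coincide. Write p = sum a_n v_n
    with a_n >= 0 and let S = {n | a_n > 0}. The segments p + t v_n (t >= 0)
    and, for n in S, p - t v_n (0 < t <= a_n) stay in C, and first-order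
    optimality of p along them gives (ii) and (iii). Conversely (i)-(iii) say
    that p - w is orthogonal to p and has nonnegative inner product with
    every v_n, hence with all of C, which makes p the projection; uniqueness
    of the projection and the absence of positive relations then determine S
    and a. *)

Section InnerProduct.
Context {R : realType} {H : normedModType R} {ip : H -> H -> R}.
Hypothesis hip : is_inner_product ip.

Lemma ipC (x y : H) : ip x y = ip y x. Proof. by case: hip. Qed.
Lemma ipDl (x y z : H) : ip (x + y) z = ip x z + ip y z. Proof. by case: hip. Qed.
Lemma ipZl (c : R) (x y : H) : ip (c *: x) y = c * ip x y.
Proof. by case: hip. Qed.
Lemma ipxx (x : H) : ip x x = `|x| ^+ 2. Proof. by case: hip. Qed.

Lemma ipNl (x y : H) : ip (- x) y = - ip x y.
Proof. by rewrite -scaleN1r ipZl mulN1r. Qed.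
Lemma ipBl (x y z : H) : ip (x - y) z = ip x z - ip y z.
Proof. by rewrite ipDl ipNl. Qed.
Lemma ipDr (x y z : H) : ip x (y + z) = ip x y + ip x z.
Proof. by rewrite !(ipC x) ipDl. Qed.
Lemma ipZr (c : R) (x y : H) : ip x (c *: y) = c * ip x y.
Proof. by rewrite !(ipC x) ipZl. Qed.
Lemma ipNr (x y : H) : ip x (- y) = - ip x y.
Proof. by rewrite !(ipC x) ipNl. Qed.
Lemma ipBr (x y z : H) : ip x (y - z) = ip x y - ip x z.
Proof. by rewrite !(ipC x) ipBl. Qed.

Lemma ip_sumr (x : H) (F : nat -> H) (P : pred nat) m n :
  ip x (\sum_(m <= k < n | P k) F k) = \sum_(m <= k < n | P k) ip x (F k).
Proof.
apply: (big_morph (ip x)) => [y z|]; first exact: ipDr.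
by rewrite -(scale0r 0) ipZr mul0r.
Qed.

Lemma sqr_normD (x y : H) : `|x + y| ^+ 2 = `|x| ^+ 2 + 2 * ip x y + `|y| ^+ 2.
Proof. by rewrite -!ipxx ipDl !ipDr (ipC y x); ring. Qed.

Lemma parallelogram (x y : H) :
  `|x - y| ^+ 2 + `|x + y| ^+ 2 = 2 * `|x| ^+ 2 + 2 * `|y| ^+ 2.
Proof. by rewrite !sqr_normD ipNr normrN; ring. Qed.

Lemma ip_polar (x y : H) : ip x y = (`|x + y| ^+ 2 - `|x| ^+ 2 - `|y| ^+ 2) / 2.
Proof. by rewrite sqr_normD; field. Qed.

Lemma cvg_ipr (x : H) (u : nat -> H) (y : H) :
  u @ \oo --> y -> (fun N => ip x (u N)) @ \oo --> ip x y.
Proof.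
have cvg_sqr_norm (f : nat -> H) z :
    f @ \oo --> z -> (fun N => `|f N| ^+ 2) @ \oo --> `|z| ^+ 2.
  by move=> fz; apply: cvgM; apply: cvg_norm.
move=> uy; rewrite ip_polar; under eq_fun do rewrite ip_polar.
apply: cvgMr_tmp; apply: cvgB; [apply: cvgB|]; apply: cvg_sqr_norm => //.
- by apply: cvgD => //; exact: cvg_cst.
- exact: cvg_cst.
Qed.

End InnerProduct.

Section ConicSeries.
Context {R : realType} {H : normedModType R} {v : nat -> H}.

Lemma psum_restrict (S : set nat) (a : nat -> R) :
  psum S a v = psum setT (a \_ S) v.
Proof.
apply/funext => N; rewrite /psum big_mkcond [RHS]big_mkcond /=.
apply: eq_bigr => k _; rewrite in_setT patchE.
by case: (k \in S); rewrite ?scale0r.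
Qed.

Lemma restrict_gt0 {S : set nat} {a : nat -> R} n :
  (forall k, S k -> 0 < a k) -> (0 < (a \_ S) n) = (n \in S).
Proof.
move=> a_gt0; rewrite patchE; case: ifPn => [/set_mem|_]; last exact: ltxx.
by move=> /a_gt0 ->.
Qed.

Lemma restrict_ge0 {S : set nat} {a : nat -> R} :
  (forall k, S k -> 0 < a k) -> forall n, 0 <= (a \_ S) n.
Proof.
move=> a_gt0 n; rewrite le_eqVlt restrict_gt0 //.
by rewrite patchE; case: ifPn => _; rewrite ?eqxx ?orbT.
Qed.

Lemma psum_pos_support (a : nat -> R) :
  (forall n, 0 <= a n) -> psum [set n | 0 < a n] a v = psum setT a v.
Proof.
move=> a_ge0; rewrite psum_restrict; congr psum; apply/funext => n.
rewrite patchE; case: ifPn => // /negP nSn; apply/eqP; rewrite eq_le a_ge0 /=.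
by rewrite leNgt; apply/negP => an_gt0; apply: nSn; rewrite inE.
Qed.

Lemma cvg_psum_comb (al be : R) {a b : nat -> R} :
  sum_cvg setT a v -> sum_cvg setT b v ->
  psum setT (fun n => al * a n + be * b n) v @ \oo -->
    al *: sum_on setT a v + be *: sum_on setT b v.
Proof.
move=> ca cb; have -> : psum setT (fun n => al * a n + be * b n) v =
    (fun N => al *: psum setT a v N + be *: psum setT b v N).
  apply/funext => N; rewrite /psum !scaler_sumr -big_split /=.
  by apply: eq_bigr => k _; rewrite scalerDl !scalerA.
by apply: cvgD; apply: cvgZl_tmp.
Qed.

Lemma cvg_psum_delta n : psum setT (fun k => (k == n)%:R) v @ \oo --> v n.
Proof.
apply: cvg_near_cst; near=> N.
rewrite /psum (eq_bigl (fun _ => true)) => [|k]; last by rewrite in_setT.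
rewrite (bigD1_seq n) ?iota_uniq //=; last first.
  by rewrite mem_index_iota ltnS; near: N; exact: nbhs_infty_ge.
rewrite eqxx scale1r big1 ?addr0 // => k /negbTE ->.
by rewrite scale0r.
Unshelve. all: by end_near.
Qed.

Lemma cone0 : cone v 0.
Proof.
have psum0 : psum setT (fun=> 0) v = fun=> 0.
  by apply/funext => N; rewrite /psum big1 // => k _; rewrite scale0r.
exists (fun=> 0); rewrite /sum_cvg /sum_on psum0; split=> //; split.
- by apply/cvg_ex; exists 0; exact: cvg_cst.
- by rewrite lim_cst.
Qed.

Lemma cone_comb (al be : R) y z : 0 <= al -> 0 <= be ->
  cone v y -> cone v z -> cone v (al *: y + be *: z).
Proof.
move=> al_ge0 be_ge0 [a [a_ge0 [ca ->]]] [b [b_ge0 [cb ->]]].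
have cab := cvg_psum_comb al be ca cb.
exists (fun n => al * a n + be * b n); split; last split.
- by move=> n; rewrite addr_ge0 // mulr_ge0.
- by apply/cvg_ex; eexists; exact: cab.
- by rewrite /sum_on (cvg_lim _ cab).
Qed.

Lemma cone_shift (a : nat -> R) n (c : R) :
  (forall k, 0 <= a k) -> sum_cvg setT a v -> 0 <= a n + c ->
  cone v (sum_on setT a v + c *: v n).
Proof.
move=> a_ge0 ca anc_ge0; have cd := cvg_psum_delta n.
have cdelta : sum_cvg setT (fun k => (k == n)%:R) v.
  by apply/cvg_ex; exists (v n); exact: cd.
have deltaE : sum_on setT (fun k => (k == n)%:R) v = v n.
  by rewrite /sum_on (cvg_lim _ cd).
have cad := cvg_psum_comb 1 c ca cdelta; rewrite deltaE scale1r in cad.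
exists (fun k => 1 * a k + c * (k == n)%:R); split; last split.
- by move=> k; rewrite mul1r; case: eqP => [->|_]; rewrite ?mulr1 ?mulr0 ?addr0.
- by apply/cvg_ex; eexists; exact: cad.
- exact/esym/(cvg_lim _ cad).
Qed.

Lemma cone_sum_on {S : set nat} {a : nat -> R} :
  cond_i v S a -> cone v (sum_on S a v).
Proof.
move=> [ca a_gt0]; exists (a \_ S); split; first exact: restrict_ge0.
by rewrite /sum_cvg /sum_on -psum_restrict.
Qed.

Lemma sum_on_inj {S S' : set nat} {a a' : nat -> R} :
  no_positive_relations v -> cond_i v S a -> cond_i v S' a' ->
  sum_on S' a' v = sum_on S a v -> S' = S /\ (forall n, S n -> a' n = a n).
Proof.
move=> npr [ca a_gt0] [ca' a'_gt0] e.
rewrite /sum_cvg (psum_restrict S) in ca.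
rewrite /sum_cvg (psum_restrict S') in ca'.
rewrite /sum_on (psum_restrict S) (psum_restrict S') in e.
have {}e := npr _ _ (restrict_ge0 a'_gt0) (restrict_ge0 a_gt0) ca' ca e.
have SE : S' = S.
  apply/funext => n; apply/propext; rewrite -[S' n]in_setE -[S n]in_setE.
  by rewrite -(restrict_gt0 n a'_gt0) -(restrict_gt0 n a_gt0) e.
split=> // n Sn; move: (e n); rewrite !patchE SE mem_set //.
Qed.

End ConicSeries.

Section InnerProductSeries.
Context {R : realType} {H : normedModType R} {ip : H -> H -> R}.
Hypothesis hip : is_inner_product ip.
Context {v : nat -> H}.

Lemma cvg_ip_sum_on {S : set nat} {a : nat -> R} (z : H) : sum_cvg S a v ->
  (fun N => \sum_(0 <= k < N.+1 | k \in S) a k * ip z (v k)) @ \oo -->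
    ip z (sum_on S a v).
Proof.
move=> ca; under eq_fun do under eq_bigr do rewrite -(ipZr hip).
by under eq_fun do rewrite -(ip_sumr hip); exact: (cvg_ipr hip).
Qed.

Lemma rsum_onE {S : set nat} {a : nat -> R} n : sum_cvg S a v ->
  rsum_on ip S a v n = ip (sum_on S a v) (v n).
Proof.
move=> ca; rewrite /rsum_on (ipC hip); apply: cvg_lim => //.
by under eq_fun do under eq_bigr do rewrite (ipC hip); exact: cvg_ip_sum_on.
Qed.

Lemma ip_sum_on_ge0 {S : set nat} {a : nat -> R} (z : H) : sum_cvg S a v ->
  (forall k, S k -> 0 <= a k * ip z (v k)) -> 0 <= ip z (sum_on S a v).
Proof.
move=> ca summand_ge0; have cz := cvg_ip_sum_on z ca.
rewrite -(cvg_lim _ cz) //; apply: limr_ge.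
  by apply/cvg_ex; eexists; exact: cz.
by apply: nearW => N; apply: sumr_ge0 => k /set_mem; exact: summand_ge0.
Qed.

End InnerProductSeries.

Lemma le0_of_lin_le_quad {R : realFieldType} (x c T : R) : 0 < T ->
  (forall t, 0 < t -> t <= T -> t * x <= t ^+ 2 * c) -> x <= 0.
Proof.
move=> T_gt0 lin_le_quad; rewrite leNgt; apply/negP => x_gt0.
have c1_gt0 : 0 < `|c| + 1 by rewrite ltr_wpDl.
pose t := Num.min T (x / (`|c| + 1)).
have t_gt0 : 0 < t by rewrite lt_min T_gt0 divr_gt0.
have tc1_le : t * (`|c| + 1) <= x by rewrite -ler_pdivlMr // ge_min lexx orbT.
have tT : t <= T by rewrite ge_min lexx.
have := lin_le_quad t t_gt0 tT; have := ler_norm c; nra.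
Qed.

Section MetricProjection.
Context {R : realType} {H : normedModType R} {ip : H -> H -> R}.
Hypothesis hip : is_inner_product ip.
Context {K : set H}.
Hypothesis Kmid : forall y z, K y -> K z -> K (2^-1 *: (y + z)).

Lemma sqr_norm_sub_le_excess {w y z : H} {D : R} :
  (forall x, K x -> D <= `|w - x| ^+ 2) -> K y -> K z ->
  `|y - z| ^+ 2 <= 2 * (`|w - y| ^+ 2 - D) + 2 * (`|w - z| ^+ 2 - D).
Proof.
move=> D_le Ky Kz.
have midE : (w - z) + (w - y) = 2 *: (w - 2^-1 *: (y + z)).
  rewrite scalerBr scalerA mulfV ?pnatr_eq0 // scale1r scaler_nat mulr2n.
  by rewrite opprD addrACA (addrC (- z)).
have : `|(w - z) + (w - y)| ^+ 2 = 4 * `|w - 2^-1 *: (y + z)| ^+ 2.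
  by rewrite midE normrZ ger0_norm // exprMn; congr (_ * _); rewrite expr2 -natrM.
have := parallelogram hip (w - z) (w - y).
have -> : (w - z) - (w - y) = y - z by rewrite opprB addrC addrA subrK.
have := D_le _ (Kmid _ _ Ky Kz); lra.
Qed.

Lemma metric_projection_unique {w p q : H} :
  is_metric_projection K w p -> is_metric_projection K w q -> p = q.
Proof.
move=> [Kp p_min] [Kq q_min].
have D_le x : K x -> `|w - p| ^+ 2 <= `|w - x| ^+ 2.
  by move=> Kx; rewrite ler_sqr ?nnegrE //; exact: p_min.
have pq_le0 : `|p - q| ^+ 2 <= 0.
  have := sqr_norm_sub_le_excess D_le Kp Kq.
  have : `|w - q| ^+ 2 <= `|w - p| ^+ 2.
    by rewrite ler_sqr ?nnegrE //; exact: q_min.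
  lra.
by apply/eqP; rewrite -subr_eq0 -normr_eq0 -sqrf_eq0 eq_le pq_le0 sqr_ge0.
Qed.

Lemma metric_projection_ip_le0 {w p u : H} {T : R} :
  is_metric_projection K w p -> 0 < T ->
  (forall t, 0 < t -> t <= T -> K (p + t *: u)) -> ip (w - p) u <= 0.
Proof.
move=> [Kp p_min] T_gt0 Kpu.
suff : 2 * ip (w - p) u <= 0 by rewrite pmulr_rle0.
apply: (@le0_of_lin_le_quad _ _ (`|u| ^+ 2) _ T_gt0) => t t_gt0 tT.
have dist_le := p_min _ (Kpu t t_gt0 tT); rewrite -ler_sqr ?nnegrE // in dist_le.
have wptuE : w - (p + t *: u) = (w - p) + (- t) *: u.
  by rewrite opprD addrA scaleNr.
rewrite wptuE (sqr_normD hip (w - p)) (ipZr hip) normrZ exprMn normrN in dist_le.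
rewrite (real_normK (num_real t)) in dist_le; nra.
Qed.

Lemma metric_projection_of_obtuse {w p : H} :
  K p -> (forall y, K y -> ip (w - p) (y - p) <= 0) -> is_metric_projection K w p.
Proof.
move=> Kp obtuse; split=> // y Ky; rewrite -ler_sqr ?nnegrE //.
have -> : w - y = (w - p) + (p - y) by rewrite addrA subrK.
rewrite (sqr_normD hip (w - p)) -[p - y]opprB (ipNr hip) normrN.
have := obtuse _ Ky; have := sqr_ge0 `|y - p|; lra.
Qed.

End MetricProjection.

Lemma cvgn_of_sqr_dist_le {R : realType} {H : completeNormedModType R}
  (e : nat -> R) (f : nat -> H) : e @ \oo --> 0 ->
  (forall k m, `|f k - f m| ^+ 2 <= e k + e m) -> cvgn f.
Proof.
move=> e0 f_le; apply/cauchy_cvgP/cauchy_exP => eps eps_gt0.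
have eps2_gt0 : 0 < eps ^+ 2 / 2 by rewrite divr_gt0 // exprn_gt0.
have [N _ e_small] := cvgr_lt _ e0 _ eps2_gt0.
exists (f N); suff : \forall m \near \oo, ball (f N) eps (f m) by [].
exists N => // m /= Nm; rewrite -ball_normE /= -ltr_sqr ?nnegrE ?(ltW eps_gt0) //.
have := f_le N m; have := e_small N (leqnn N); have := e_small m Nm; lra.
Qed.

Section HilbertProjection.
Context {R : realType} {H : completeNormedModType R} {ip : H -> H -> R}.
Hypothesis hip : is_inner_product ip.

Context {K : set H}.
Hypotheses (K_closed : closed K) (K_neq0 : K !=set0).
Hypothesis Kmid : forall y z, K y -> K z -> K (2^-1 *: (y + z)).

Lemma metric_projection_exists (w : H) : exists p, is_metric_projection K w p.
Proof.
pose E := [set `|w - y| ^+ 2 | y in K]; pose D := inf E.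
have E_lb : has_lbound E by exists 0 => _ [y _ <-]; exact: sqr_ge0.
have E_inf : has_inf E.
  by split=> //; case: K_neq0 => y Ky; exists (`|w - y| ^+ 2), y.
have D_le y : K y -> D <= `|w - y| ^+ 2.
  by move=> Ky; apply: ge_inf => //; exists y.
have /choice[f f_min] k : exists y, K y /\ `|w - y| ^+ 2 < D + k.+1%:R^-1.
  have [_ [y Ky <-] ?] := @inf_adherent _ E k.+1%:R^-1 ltac:(by []) E_inf.
  by exists y.
have Kf k : K (f k) by case: (f_min k).
have cf : cvgn f.
  apply: (@cvgn_of_sqr_dist_le _ _ (fun k => 2 * k.+1%:R^-1)) => [|k m /=].
    by rewrite -(mulr0 2); apply: cvgMl_tmp; exact: cvg_harmonic.
  have := sqr_norm_sub_le_excess hip Kmid D_le (Kf k) (Kf m).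
  have [_ fk_min] := f_min k; have [_ fm_min] := f_min m.
  move: fk_min fm_min; set ik := k.+1%:R^-1; set im := m.+1%:R^-1; lra.
have Kp : K (limn f) by apply: closed_cvg K_closed _ _ cf; exact: nearW.
have p_le : `|w - limn f| ^+ 2 <= D.
  have c1 : (fun k => `|w - f k| ^+ 2) @ \oo --> `|w - limn f| ^+ 2.
    by apply: cvgM; apply: cvg_norm; apply: cvgB => //; exact: cvg_cst.
  have c2 : (fun k => D + k.+1%:R^-1) @ \oo --> D.
    rewrite -[X in _ --> X]addr0.
    by apply: cvgD; [exact: cvg_cst|exact: cvg_harmonic].
  rewrite -(cvg_lim _ c1) // -(cvg_lim _ c2) //; apply: ler_lim.
  - by apply/cvg_ex; eexists; exact: c1.
  - by apply/cvg_ex; eexists; exact: c2.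
  - by apply: nearW => k; have [_ /ltW] := f_min k.
exists (limn f); split=> // y Ky; rewrite -ler_sqr ?nnegrE //.
exact: le_trans p_le (D_le _ Ky).
Qed.

End HilbertProjection.

Section ConeProjection.
Context {R : realType} {H : normedModType R} {ip : H -> H -> R}.
Hypothesis hip : is_inner_product ip.
Context {v : nat -> H}.

Lemma cone_midpoint y z : cone v y -> cone v z -> cone v (2^-1 *: (y + z)).
Proof.
by move=> Ky Kz; rewrite scalerDr; apply: cone_comb; rewrite ?invr_ge0.
Qed.

Lemma kkt_metric_projection {w : H} {S : set nat} {a : nat -> R} :
  cond_i v S a -> cond_ii ip v w S a -> cond_iii ip v w S a ->
  is_metric_projection (cone v) w (sum_on S a v).
Proof.
move=> ci ii iii; have [ca _] := ci; set p := sum_on S a v.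
have ip_ge0 n : 0 <= ip (p - w) (v n).
  by rewrite (ipBl hip) subr_ge0 -(rsum_onE hip).
have ip_eq0 n : S n -> ip (w - p) (v n) = 0.
  by move=> Sn; rewrite (ipBl hip) -(rsum_onE hip) // iii // subrr.
apply: (metric_projection_of_obtuse hip (cone_sum_on ci)).
move=> _ [b [b_ge0 [cb ->]]].
have ip_p_ge0 : 0 <= ip (w - p) p.
  by apply: (ip_sum_on_ge0 hip) => // k Sk; rewrite ip_eq0 // mulr0.
have ip_y_le0 : ip (w - p) (sum_on setT b v) <= 0.
  rewrite -[w - p]opprB (ipNl hip) oppr_le0.
  by apply: (ip_sum_on_ge0 hip) => // k _; exact: mulr_ge0 (b_ge0 k) (ip_ge0 k).
by rewrite (ipBr hip) subr_le0; exact: le_trans ip_y_le0 ip_p_ge0.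
Qed.

Section ProjectionCoefficients.
Variables (w : H) (a : nat -> R).
Hypotheses (a_ge0 : forall k, 0 <= a k) (ca : sum_cvg setT a v).
Hypothesis proj : is_metric_projection (cone v) w (sum_on setT a v).

Lemma metric_projection_cone_ip_ge n : ip w (v n) <= ip (sum_on setT a v) (v n).
Proof.
rewrite -subr_le0 -(ipBl hip); apply: (metric_projection_ip_le0 hip proj ltr01).
by move=> t t_gt0 _; apply: cone_shift; rewrite // addr_ge0 // ltW.
Qed.

Lemma metric_projection_cone_ip_le n :
  0 < a n -> ip (sum_on setT a v) (v n) <= ip w (v n).
Proof.
move=> an_gt0; rewrite -subr_ge0 -(ipBl hip) -oppr_le0 -(ipNr hip).
apply: (metric_projection_ip_le0 hip proj an_gt0) => t _ t_le.
by rewrite scalerN -scaleNr; apply: cone_shift; rewrite // subr_ge0.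
Qed.

End ProjectionCoefficients.
End ConeProjection.

Theorem proposition1p3 (R : realType) (H : completeNormedModType R)
  (ip : H -> H -> R) (hip : is_inner_product ip)
  (v : nat -> H) (hnpr : no_positive_relations v) (hcl : closed (cone v))
  (w : H) :
  exists (S : set nat) (a : nat -> R),
    [/\ cond_i v S a,
        is_metric_projection (cone v) w (sum_on S a v),
        cond_ii ip v w S a,
        cond_iii ip v w S a &
        forall (S' : set nat) (a' : nat -> R), cond_i v S' a' ->
          (is_metric_projection (cone v) w (sum_on S' a' v) \/
           (cond_ii ip v w S' a' /\ cond_iii ip v w S' a')) ->
          S' = S /\ (forall n, S n -> a' n = a n)].
Proof.
have [p proj] := metric_projection_exists hip hcl (ex_intro _ _ cone0)
  cone_midpoint w.
have [[a [a_ge0 [ca pE]]] _] := proj; rewrite {p}pE in proj.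
pose S := [set n | 0 < a n].
have psumS : psum S a v = psum setT a v by exact: psum_pos_support.
have ciS : cond_i v S a by split=> //; rewrite /sum_cvg psumS.
have pS : sum_on S a v = sum_on setT a v by rewrite /sum_on psumS.
have ipE n : rsum_on ip S a v n = ip (sum_on setT a v) (v n).
  by rewrite (rsum_onE hip n ciS.1) pS.
have ii : cond_ii ip v w S a.
  by move=> n; rewrite ipE; exact: metric_projection_cone_ip_ge.
have iii : cond_iii ip v w S a.
  move=> n an_gt0; apply/le_anti; rewrite ii andbT ipE.
  exact: metric_projection_cone_ip_le.
exists S, a; split=> //; first by rewrite pS.
move=> S' a' ci' proj'_or_kkt.
have proj' : is_metric_projection (cone v) w (sum_on S' a' v).
  by case: proj'_or_kkt => [//|[ii' iii']]; exact: (kkt_metric_projection hip).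
apply: (sum_on_inj hnpr ciS ci'); rewrite pS.
exact: (metric_projection_unique hip cone_midpoint proj' proj).
Qed.
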